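(* Let $R$ be a monad on Sets and $LM$ a left $R$-module with values in Sets. Let $C\subset\coprod_{n}\prod_{i=0}^{n-1}LM([i])$, $\widetilde C\subset\coprod_n(\prod_{i=0}^nLM([i]))\times R([n])$, $Ceq\subset\coprod_n(\prod_{i=0}^{n-1}LM([i]))\times LM([n])^2$ and $\widetilde{Ceq}\subset\coprod_n(\prod_{i=0}^nLM([i]))\times R([n])^2$ be subsets satisfying the following conditions, for all sequences and elements for which the expressions are well formed (with $i=l(\Gamma_1)$ and $n=l(\Gamma)$): (1) $C,\widetilde C$ satisfy: (1.1) $(\rhd)$; (1.2) $(\Gamma,T\rhd)\Rightarrow(\Gamma\rhd)$; (1.3) $(\Gamma\vdash r:R)\Rightarrow(\Gamma,R\rhd)$; (1.4) $(\Gamma,T\rhd)\wedge(\Gamma,\Delta\vdash r:R)\Rightarrow(\Gamma,T,t_{n+1}\Delta\vdash t_{n+1}r:t_{n+1}R)$; (1.5) $(\Gamma\vdash s:S)\wedge(\Gamma,S,\Delta\vdash r:R)\Rightarrow(\Gamma,s_{n+1}(\Delta[s/n+1])\vdash s_{n+1}(r[s/n+1]):s_{n+1}(R[s/n+1]))$; (1.6) $(\Gamma,T\rhd)\Rightarrow(\Gamma,T\vdash n+1:t_{n+1}T)$; (2a) $(\Gamma\vdash T=T')\Rightarrow(\Gamma,T\rhd)$; (2b) $(\Gamma,T\rhd)\Rightarrow(\Gamma\vdash T=T)$; (2c) $(\Gamma\vdash T=T')\Rightarrow(\Gamma\vdash T'=T)$; (2d) $(\Gamma\vdash T=T')\wedge(\Gamma\vdash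 T'=T'')\Rightarrow(\Gamma\vdash T=T'')$; (3a) $(\Gamma\vdash o=o':T)\Rightarrow(\Gamma\vdash o:T)$; (3b) $(\Gamma\vdash o:T)\Rightarrow(\Gamma\vdash o=o:T)$; (3c) $(\Gamma\vdash o=o':T)\Rightarrow(\Gamma\vdash o'=o:T)$; (3d) $(\Gamma\vdash o=o':T)\wedge(\Gamma\vdash o'=o'':T)\Rightarrow(\Gamma\vdash o=o'':T)$; (4a) $(\Gamma_1\vdash T=T')\wedge(\Gamma_1,T,\Gamma_2\vdash S=S')\Rightarrow(\Gamma_1,T',\Gamma_2\vdash S=S')$; (4b) $(\Gamma_1\vdash T=T')\wedge(\Gamma_1,T,\Gamma_2\vdash o=o':S)\Rightarrow(\Gamma_1,T',\Gamma_2\vdash o=o':S)$; (4c) $(\Gamma\vdash S=S')\wedge(\Gamma\vdash o=o':S)\Rightarrow(\Gamma\vdash o=o':S')$; (5a) $(\Gamma_1,T\rhd)\wedge(\Gamma_1,\Gamma_2\vdash S=S')\Rightarrow(\Gamma_1,T,t_{i+1}\Gamma_2\vdash t_{i+1}S=t_{i+1}S')$; (5b) $(\Gamma_1,T\rhd)\wedge(\Gamma_1,\Gamma_2\vdash o=o':S)\Rightarrow(\Gamma_1,T,t_{i+1}\Gamma_2\vdash t_{i+1}o=t_{i+1}o':t_{i+1}S)$; (6a) $(\Gamma_1,T,\Gamma_2\vdash S=S')\wedge(\Gamma_1\vdash r:T)\Rightarrow(\Gamma_1,s_{i+1}(\Gamma_2[r/i+1])\vdash s_{i+1}(S[r/i+1])=s_{i+1}(S'[r/i+1]))$;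 (6b) $(\Gamma_1,T,\Gamma_2\vdash o=o':S)\wedge(\Gamma_1\vdash r:T)\Rightarrow(\Gamma_1,s_{i+1}(\Gamma_2[r/i+1])\vdash s_{i+1}(o[r/i+1])=s_{i+1}(o'[r/i+1]):s_{i+1}(S[r/i+1]))$; (7a) $(\Gamma_1,T,\Gamma_2,S\rhd)\wedge(\Gamma_1\vdash r=r':T)\Rightarrow(\Gamma_1,s_{i+1}(\Gamma_2[r/i+1])\vdash s_{i+1}(S[r/i+1])=s_{i+1}(S[r'/i+1]))$; (7b) $(\Gamma_1,T,\Gamma_2\vdash o:S)\wedge(\Gamma_1\vdash r=r':T)\Rightarrow(\Gamma_1,s_{i+1}(\Gamma_2[r/i+1])\vdash s_{i+1}(o[r/i+1])=s_{i+1}(o[r'/i+1]):s_{i+1}(S[r/i+1]))$. Then the relations $\sim$ on $C$ and $\simeq$ on $\widetilde C$ defined below are equivalence relations which form a regular congruence relation on the C-subsystem of $CC(R,LM)$ determined by $(C,\widetilde C)$, i.e. they satisfy conditions (a)–(f) listed below.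
   Context: Notation: $[n]=\{1,\dots,n\}$. $R$ is a monad on Sets (unit $\eta$, Kleisli extension $\mathrm{bind}$, monad laws $\mathrm{bind}(\eta_X)=\mathrm{id}$, $\mathrm{bind}(f)\circ\eta_X=f$, $\mathrm{bind}(\mathrm{bind}(g)\circ f)=\mathrm{bind}(g)\circ\mathrm{bind}(f)$); $LM$ is a left $R$-module: functor with $\rho(f):LM(X)\to LM(Y)$ for $f:X\to R(Y)$, $\rho(\eta_X)=\mathrm{id}$, $\rho(g)\circ\rho(f)=\rho(\mathrm{bind}(g)\circ f)$. Elements of $Y$ are regarded in $R(Y)$ via $\eta_Y$; $E(f_1/1,\dots,f_m/m)$ is $\rho(f)(E)$ (for $E\in LM([m])$) or $\mathrm{bind}(f)(E)$ (for $E\in R([m])$), $f(i)=f_i$. For $E\in LM([m])$ or $R([m])$, $m\ge n$: $t_{n+1}E:=E(1/1,\dots,n/n,n+2/n+1,\dots,m+1/m)$; for $m\ge n+1$, $s\in R([n])$: $s_{n+1}(E[s/n+1]):=E(1/1,\dots,n/n,s/n+1,n+1/n+2,\dots,m-1/m)$ (an element of $LM([m-1])$ resp. $R([m-1])$). These are applied componentwise to sequences $\Delta=(D_1,\dots,D_k)$. Judgement notation: contexts are sequences $\Gamma=(T_1,\dots,T_n)$ with $T_j\in LM([j-1])$, $l(\Gamma)=n$, $ft(T_1,\dots,T_n)=(T_1,\dots,T_{n-1})$; commas denote concatenation. $(\Gamma\rhd)$ means $\Gamma\in C$; $(\Gamma\vdash t:T)$ ($T\in LM([n])$, $t\in R([n])$)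 means $(\Gamma,T,t)\in\widetilde C$; $(\Gamma\vdash S=S')$ ($S,S'\in LM([n])$) means $(\Gamma,S,S')\in Ceq$; $(\Gamma\vdash o=o':S)$ ($o,o'\in R([n])$) means $(\Gamma,S,o,o')\in\widetilde{Ceq}$. For $\mathcal J=(\Gamma\vdash t:T)\in\widetilde C$, $\partial(\mathcal J)=(\Gamma,T)$. Relations: for $\Gamma=(T_1,\dots,T_n),\Gamma'=(T'_1,\dots,T'_n)\in C$ (same length), $\Gamma\sim\Gamma'$ iff $n=0$, or $ft(\Gamma)\sim ft(\Gamma')$ and $(T_1,\dots,T_{n-1}\vdash T_n=T'_n)$ (defined recursively; sequences of different lengths are not related). For $(\Gamma\vdash o:S),(\Gamma'\vdash o':S')\in\widetilde C$: $(\Gamma\vdash o:S)\simeq(\Gamma'\vdash o':S')$ iff $(\Gamma,S)\sim(\Gamma',S')$ and $(\Gamma\vdash o=o':S)$. Operations of $CC(R,LM)$ (with $n=l(\Gamma)$): $T((\Gamma,T),(\Gamma,\Delta))=(\Gamma,T,t_{n+1}\Delta)$; $\widetilde T((\Gamma,T),(\Gamma,\Delta\vdash r:R))=(\Gamma,T,t_{n+1}\Delta\vdash t_{n+1}r:t_{n+1}R)$; $S((\Gamma\vdash s:S),(\Gamma,S,\Delta))=(\Gamma,s_{n+1}(\Delta[s/n+1]))$; $\widetilde S((\Gamma\vdash s:S),(\Gamma,S,\Delta\vdash r:R))=(\Gamma,s_{n+1}(\Delta[s/n+1])\vdash s_{n+1}(r[s/n+1]):s_{n+1}(R[s/n+1]))$;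 $\delta(\Gamma,T)=(\Gamma,T\vdash n+1:t_{n+1}T)$. Regular congruence conditions for relations $\sim$ on $C$, $\simeq$ on $\widetilde C$: (a) both are equivalence relations; (b) $\Gamma\sim\Gamma'$ implies $l(\Gamma)=l(\Gamma')$ and $ft(\Gamma)\sim ft(\Gamma')$; (c) $\mathcal J\simeq\mathcal J'$ implies $\partial\mathcal J\sim\partial\mathcal J'$; (d) if $(\Gamma,T)\in C$, $\Gamma'\in C$ and $\Gamma\sim\Gamma'$, then there is $(\Gamma',T')\in C$ with $(\Gamma,T)\sim(\Gamma',T')$; (e) if $\mathcal J\in\widetilde C$, $F\in C$ and $\partial\mathcal J\sim F$, then there is $\mathcal J'\in\widetilde C$ with $\partial\mathcal J'=F$ and $\mathcal J\simeq\mathcal J'$; (f) $\sim,\simeq$ are compatible with $T,\widetilde T,S,\widetilde S,\delta$: whenever the arguments lie in $C$/$\widetilde C$, are pairwise related by $\sim$/$\simeq$, and both applications are defined, the results are related by $\sim$ (for $T,S$) or $\simeq$ (for $\widetilde T,\widetilde S,\delta$). *)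

From HB Require Import structures.
From mathcomp Require Import all_boot zify.
Set Implicit Arguments. Unset Strict Implicit. Unset Printing Implicit Defensive.

(* The finite set [n] = {1,...,n} is represented by 'I_n, the element *)
(* j of [n] being the ordinal j-1.                                    *)

Record monad := Monad {
  mon :> Type -> Type;
  eta : forall X, X -> mon X;
  bind : forall X Y, (X -> mon Y) -> mon X -> mon Y;
  bind_eta : forall X (x : mon X), bind (@eta X) x = x;
  bind_etaK : forall X Y (f : X -> mon Y) (x : X), bind f (eta x) = f x;
  bind_bind : forall X Y Z (f : X -> mon Y) (g : Y -> mon Z) (x : mon X),
      bind (fun y => bind g (f y)) x = bind g (bind f x) }.

Record lmodule (R : monad) := LModule {
  lmod :> Type -> Type;
  rho : forall X Y, (X -> R Y) -> lmod X -> lmod Y;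
  rho_eta : forall X (E : lmod X), rho (@eta R X) E = E;
  rho_rho : forall X Y Z (f : X -> R Y) (g : Y -> R Z) (E : lmod X),
      rho g (rho f E) = rho (fun x => bind g (f x)) E }.

Lemma bump_ltS (n m : nat) (i : 'I_m) : bump n i < m.+1.
Proof. have := ltn_ord i; rewrite /bump; case: (n <= i) => /=; lia. Qed.

Lemma pred_ord_lt (n m' : nat) (i : 'I_m'.+1) : n < i -> i.-1 < m'.
Proof. have := ltn_ord i; lia. Qed.

Section Ops.
Variable R : monad.
(* F is either R itself (acting by bind) or a left module (acting by rho) *)
Variable F : Type -> Type.
Variable act : forall X Y, (X -> R Y) -> F X -> F Y.

(* elements of the coproduct over m of F([m]) *)
Definition dep := {m : nat & F 'I_m}.

(* the variable renaming 1/1,...,n/n, n+2/n+1, ..., m+1/m  : [m] -> R([m+1]) *)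
Definition tfun (n m : nat) (i : 'I_m) : R 'I_m.+1 := eta R (Ordinal (bump_ltS n i)).

Definition tsh (n : nat) (d : dep) : dep :=
  let: existT m E := d in existT _ m.+1 (act (@tfun n m) E).

(* the substitution 1/1,...,n/n, s/n+1, n+1/n+2, ..., m'/m'+1 : [m'+1] -> R([m']) *)
Definition sfun (n m' : nat) (Hn : n <= m') (s : R 'I_n) (i : 'I_m'.+1) : R 'I_m' :=
  match ltngtP i n with
  | CompareNatLt H => eta R (Ordinal (leq_trans H Hn))
  | CompareNatGt H => eta R (Ordinal (pred_ord_lt H))
  | CompareNatEq _ => bind (fun j : 'I_n => eta R (widen_ord Hn j)) s
  end.

(* s_{n+1}(E[s/n+1]) where s in R([n]); for ill-formed inputs (m < n+1) it
   returns E unchanged (such inputs never occur in the statement, where all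
   arguments come from the sets C, C~, Ceq, C~eq which consist of
   well-formed data). *)
Definition ssub (s : {n : nat & R 'I_n}) (d : dep) : dep :=
  let: existT n s' := s in
  let: existT m E := d in
  match m return F 'I_m -> dep with
  | 0 => fun E => existT _ 0 E
  | m'.+1 => fun E =>
      match leqP n m' with
      | LeqNotGtn H => existT _ m' (act (sfun H s') E)
      | GtnNotLeq _ => existT _ m'.+1 E
      end
  end E.
End Ops.

Section Csys.
Variable R : monad.
Variable LM : lmodule R.

Definition dL := dep LM.
Definition dR := dep R.

Definition tL (n : nat) : dL -> dL := tsh (@rho R LM) n.
Definition tR (n : nat) : dR -> dR := tsh (@bind R) n.
Definition sL (s : dR) : dL -> dL := ssub (@rho R LM) s.
Definition sR (s : dR) : dR -> dR := ssub (@bind R) s.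

(* the variable n+1 of [n+1], as an element of R([n+1]) *)
Definition var (n : nat) : dR := existT _ n.+1 (eta R (@ord_max n)).

Fixpoint wf_from (k : nat) (G : seq dL) : Prop :=
  if G is T :: G' then projT1 T = k /\ wf_from k.+1 G' else True.
(* contexts (T_1,...,T_n), T_j in LM([j-1]) *)
Definition wf_ctx (G : seq dL) : Prop := wf_from 0 G.

Definition ft (G : seq dL) : seq dL := take (size G).-1 G.

Definition jdg := (seq dL * dL * dR)%type.
Definition bd (J : jdg) : seq dL := J.1.1 ++ [:: J.1.2].

Variable C : seq dL -> Prop.
Variable Ct : seq dL -> dL -> dR -> Prop.
Variable Ceq : seq dL -> dL -> dL -> Prop.
Variable Cteq : seq dL -> dL -> dR -> dR -> Prop.

Definition inCt (J : jdg) : Prop := Ct J.1.1 J.1.2 J.2.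

Record conditions : Prop := {
  sub_C : forall G, C G -> wf_ctx G;
  sub_Ct : forall G T t, Ct G T t -> wf_ctx (G ++ [:: T]) /\ projT1 t = size G;
  sub_Ceq : forall G T T', Ceq G T T' ->
      wf_ctx (G ++ [:: T]) /\ wf_ctx (G ++ [:: T']);
  sub_Cteq : forall G T o o', Cteq G T o o' ->
      [/\ wf_ctx (G ++ [:: T]), projT1 o = size G & projT1 o' = size G];
  c1_1 : C [::];
  c1_2 : forall G T, C (G ++ [:: T]) -> C G;
  c1_3 : forall G Q r, Ct G Q r -> C (G ++ [:: Q]);
  c1_4 : forall G T D Q r, C (G ++ [:: T]) -> Ct (G ++ D) Q r ->
      Ct (G ++ T :: map (tL (size G)) D) (tL (size G) Q) (tR (size G) r);
  c1_5 : forall G S s D Q r, Ct G S s -> Ct (G ++ S :: D) Q r ->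
      Ct (G ++ map (sL s) D) (sL s Q) (sR s r);
  c1_6 : forall G T, C (G ++ [:: T]) ->
      Ct (G ++ [:: T]) (tL (size G) T) (var (size G));
  c2a : forall G T T', Ceq G T T' -> C (G ++ [:: T]);
  c2b : forall G T, C (G ++ [:: T]) -> Ceq G T T;
  c2c : forall G T T', Ceq G T T' -> Ceq G T' T;
  c2d : forall G T T' T'', Ceq G T T' -> Ceq G T' T'' -> Ceq G T T'';
  c3a : forall G T o o', Cteq G T o o' -> Ct G T o;
  c3b : forall G T o, Ct G T o -> Cteq G T o o;
  c3c : forall G T o o', Cteq G T o o' -> Cteq G T o' o;
  c3d : forall G T o o' o'', Cteq G T o o' -> Cteq G T o' o'' -> Cteq G T o o'';
  c4a : forall G1 T T' G2 S S', Ceq G1 T T' -> Ceq (G1 ++ T :: G2) S S' ->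
      Ceq (G1 ++ T' :: G2) S S';
  c4b : forall G1 T T' G2 S o o', Ceq G1 T T' -> Cteq (G1 ++ T :: G2) S o o' ->
      Cteq (G1 ++ T' :: G2) S o o';
  c4c : forall G S S' o o', Ceq G S S' -> Cteq G S o o' -> Cteq G S' o o';
  c5a : forall G1 T G2 S S', C (G1 ++ [:: T]) -> Ceq (G1 ++ G2) S S' ->
      Ceq (G1 ++ T :: map (tL (size G1)) G2) (tL (size G1) S) (tL (size G1) S');
  c5b : forall G1 T G2 S o o', C (G1 ++ [:: T]) -> Cteq (G1 ++ G2) S o o' ->
      Cteq (G1 ++ T :: map (tL (size G1)) G2) (tL (size G1) S)
           (tR (size G1) o) (tR (size G1) o');
  c6a : forall G1 T G2 S S' r, Ceq (G1 ++ T :: G2) S S' -> Ct G1 T r ->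
      Ceq (G1 ++ map (sL r) G2) (sL r S) (sL r S');
  c6b : forall G1 T G2 S o o' r, Cteq (G1 ++ T :: G2) S o o' -> Ct G1 T r ->
      Cteq (G1 ++ map (sL r) G2) (sL r S) (sR r o) (sR r o');
  c7a : forall G1 T G2 S r r', C (G1 ++ T :: G2 ++ [:: S]) -> Cteq G1 T r r' ->
      Ceq (G1 ++ map (sL r) G2) (sL r S) (sL r' S);
  c7b : forall G1 T G2 S o r r', Ct (G1 ++ T :: G2) S o -> Cteq G1 T r r' ->
      Cteq (G1 ++ map (sL r) G2) (sL r S) (sR r o) (sR r' o)
}.

Inductive csim : seq dL -> seq dL -> Prop :=
| csim0 : C [::] -> csim [::] [::]
| csimS G G' T T' : C (G ++ [:: T]) -> C (G' ++ [:: T']) ->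
    csim G G' -> Ceq G T T' -> csim (G ++ [:: T]) (G' ++ [:: T']).

Definition csimeq (J J' : jdg) : Prop :=
  [/\ inCt J, inCt J', csim (bd J) (bd J') & Cteq J.1.1 J.1.2 J.2 J'.2].

Record regular_congruence (sim : seq dL -> seq dL -> Prop)
    (simeq : jdg -> jdg -> Prop) : Prop := {
  rc_a_onC : forall G G', sim G G' -> C G /\ C G';
  rc_a_refl : forall G, C G -> sim G G;
  rc_a_sym : forall G G', sim G G' -> sim G' G;
  rc_a_trans : forall G G' G'', sim G G' -> sim G' G'' -> sim G G'';
  rc_a_onCt : forall J J', simeq J J' -> inCt J /\ inCt J';
  rc_a_refl' : forall J, inCt J -> simeq J J;
  rc_a_sym' : forall J J', simeq J J' -> simeq J' J;
  rc_a_trans' : forall J J' J'', simeq J J' -> simeq J' J'' -> simeq J J'';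
  rc_b : forall G G', sim G G' -> size G = size G' /\ sim (ft G) (ft G');
  rc_c : forall J J', simeq J J' -> sim (bd J) (bd J');
  rc_d : forall G T G', C (G ++ [:: T]) -> C G' -> sim G G' ->
      exists T', C (G' ++ [:: T']) /\ sim (G ++ [:: T]) (G' ++ [:: T']);
  rc_e : forall J F, inCt J -> C F -> sim (bd J) F ->
      exists J', [/\ inCt J', bd J' = F & simeq J J'];
  rc_fT : forall G T D G' T' D',
      C (G ++ [:: T]) -> C (G ++ D) -> C (G' ++ [:: T']) -> C (G' ++ D') ->
      sim (G ++ [:: T]) (G' ++ [:: T']) -> sim (G ++ D) (G' ++ D') ->
      sim (G ++ T :: map (tL (size G)) D) (G' ++ T' :: map (tL (size G')) D');
  rc_fTt : forall G T D Q r G' T' D' Q' r',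
      C (G ++ [:: T]) -> Ct (G ++ D) Q r -> C (G' ++ [:: T']) -> Ct (G' ++ D') Q' r' ->
      sim (G ++ [:: T]) (G' ++ [:: T']) -> simeq (G ++ D, Q, r) (G' ++ D', Q', r') ->
      simeq (G ++ T :: map (tL (size G)) D, tL (size G) Q, tR (size G) r)
            (G' ++ T' :: map (tL (size G')) D', tL (size G') Q', tR (size G') r');
  rc_fS : forall G S s D G' S' s' D',
      Ct G S s -> C (G ++ S :: D) -> Ct G' S' s' -> C (G' ++ S' :: D') ->
      simeq (G, S, s) (G', S', s') -> sim (G ++ S :: D) (G' ++ S' :: D') ->
      sim (G ++ map (sL s) D) (G' ++ map (sL s') D');
  rc_fSt : forall G S s D Q r G' S' s' D' Q' r',
      Ct G S s -> Ct (G ++ S :: D) Q r -> Ct G' S' s' -> Ct (G' ++ S' :: D') Q' r' ->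
      simeq (G, S, s) (G', S', s') -> simeq (G ++ S :: D, Q, r) (G' ++ S' :: D', Q', r') ->
      simeq (G ++ map (sL s) D, sL s Q, sR s r) (G' ++ map (sL s') D', sL s' Q', sR s' r');
  rc_fdelta : forall G T G' T',
      C (G ++ [:: T]) -> C (G' ++ [:: T']) -> sim (G ++ [:: T]) (G' ++ [:: T']) ->
      simeq (G ++ [:: T], tL (size G) T, var (size G))
            (G' ++ [:: T'], tL (size G') T', var (size G'))
}.
End Csys.

From mathcomp Require Import all_boot zify.
Set Implicit Arguments. Unset Strict Implicit. Unset Printing Implicit Defensive.

(* Axioms (4a)-(4c) transport every judgement along [~] of its context, so
   [~] is an equivalence and judgements over [~]-related contexts can be
   exchanged, which gives (a)-(e).  The compatibilities (f) follow by
   induction on the extension Delta: weakening a componentwise equality is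
   (5a), and substituting [~]-related terms is (6a) followed by (7a). *)

Lemma cats1_inj (A : Type) (G G' : seq A) (T T' : A) :
  G ++ [:: T] = G' ++ [:: T'] -> G = G' /\ T = T'.
Proof. by rewrite !cats1 => /rcons_inj [-> ->]. Qed.

Lemma cat_cons_rcons (A : Type) (G : seq A) (S : A) (D : seq A) (X : A) :
  G ++ S :: rcons D X = (G ++ S :: D) ++ [:: X].
Proof. by rewrite -cats1 -catA. Qed.

Section RegularCongruence.
Variables (R : monad) (LM : lmodule R).
Variables (C : seq (dL LM) -> Prop) (Ct : seq (dL LM) -> dL LM -> dR R -> Prop).
Variable Ceq : seq (dL LM) -> dL LM -> dL LM -> Prop.
Variable Cteq : seq (dL LM) -> dL LM -> dR R -> dR R -> Prop.
Hypothesis cond : conditions C Ct Ceq Cteq.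

Local Notation sim := (csim C Ceq).
Local Notation simeq := (csimeq C Ct Ceq Cteq).

Lemma csim_C G G' : sim G G' -> C G /\ C G'.
Proof. by case. Qed.

Lemma csim_size G G' : sim G G' -> size G = size G'.
Proof. by elim=> // G0 G0' T T' _ _ _ IH _; rewrite !size_cat IH. Qed.

Lemma csim_snoc_invl G T B : sim (G ++ [:: T]) B ->
  exists G' T', [/\ B = G' ++ [:: T'], C (G' ++ [:: T']), sim G G' & Ceq G T T'].
Proof.
move EA : (G ++ [:: T]) => A hs; case: hs EA => [_ | G0 G0' T0 T0' _ hC' hs he] EA.
  by have := congr1 size EA; rewrite size_cat addn1.
by case: (cats1_inj EA) => -> ->; exists G0', T0'.
Qed.

Lemma csim_snoc_inv G T G' T' : sim (G ++ [:: T]) (G' ++ [:: T']) ->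
  sim G G' /\ Ceq G T T'.
Proof.
move=> h; case: (csim_snoc_invl h) => G2 [T2 [E _ hs he]].
by case: (cats1_inj E) => -> ->.
Qed.

Lemma csim_snoc_size G T G' T' : sim (G ++ [:: T]) (G' ++ [:: T']) ->
  size G = size G'.
Proof. by case/csim_snoc_inv=> /csim_size. Qed.

Lemma csim_cat_size G G' D D' : size G = size G' -> sim (G ++ D) (G' ++ D') ->
  size D = size D'.
Proof. by move=> hG /csim_size; rewrite !size_cat hG => /addnI. Qed.

Lemma Ceq_transport G G' H S S' : sim G G' ->
  Ceq (G ++ H) S S' -> Ceq (G' ++ H) S S'.
Proof.
move=> hs; elim: hs H => [_ | G0 G0' T T' _ _ _ IH he] H // h.
by rewrite -catA; apply: IH; apply: (c4a cond he); rewrite -catA in h.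
Qed.

Lemma Cteq_transport G G' H S o o' : sim G G' ->
  Cteq (G ++ H) S o o' -> Cteq (G' ++ H) S o o'.
Proof.
move=> hs; elim: hs H => [_ | G0 G0' T T' _ _ _ IH he] H // h.
by rewrite -catA; apply: IH; apply: (c4b cond he); rewrite -catA in h.
Qed.

Lemma C_transport G G' H : sim G G' -> C (G ++ H) -> C (G' ++ H).
Proof.
move=> hs; case/lastP: H => [|H X].
  by rewrite !cats0 => _; case: (csim_C hs).
by rewrite -cats1 !catA => /(c2b cond) /(Ceq_transport hs) /(c2a cond).
Qed.

Lemma Ceq_transport0 G G' S S' : sim G G' -> Ceq G S S' -> Ceq G' S S'.
Proof. by move=> hs; have := @Ceq_transport _ _ [::] S S' hs; rewrite !cats0. Qed.

Lemma Cteq_transport0 G G' S o o' : sim G G' -> Cteq G S o o' -> Cteq G' S o o'.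
Proof. by move=> hs; have := @Cteq_transport _ _ [::] S o o' hs; rewrite !cats0. Qed.

Lemma csim_refl G : C G -> sim G G.
Proof.
elim/last_ind: G => [|G T IH] h; first exact: csim0.
rewrite -cats1 in h *; apply: csimS => //; first exact: IH (c1_2 cond h).
exact: (c2b cond).
Qed.

Lemma csim_sym G G' : sim G G' -> sim G' G.
Proof.
elim=> [h | G0 G0' T T' hC hC' hs IH he]; first exact: csim0.
by apply: csimS => //; apply: (Ceq_transport0 hs); apply: (c2c cond).
Qed.

Lemma csim_trans G G' G'' : sim G G' -> sim G' G'' -> sim G G''.
Proof.
move=> hs; elim: hs G'' => [_ | G0 G0' T T' hC _ hs IH he] G'' // h.
case: (csim_snoc_invl h) => G2 [T2 [-> hC2 hs2 he2]].
apply: csimS => //; first exact: IH.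
by apply: (c2d cond he); apply: (Ceq_transport0 (csim_sym hs)).
Qed.

Lemma csim_ft G G' : sim G G' -> sim (ft G) (ft G').
Proof.
have ft_snoc (H : seq (dL LM)) X : ft (H ++ [:: X]) = H.
  by rewrite /ft size_cat addn1 /= take_size_cat.
by case=> [h | G0 G0' T T' _ _ hs _]; [exact: csim0 | rewrite !ft_snoc].
Qed.

Lemma csim_extend G T G' : C (G ++ [:: T]) -> sim G G' ->
  exists T', C (G' ++ [:: T']) /\ sim (G ++ [:: T]) (G' ++ [:: T']).
Proof.
move=> hC hs; have hC' := C_transport hs hC.
by exists T; split=> //; apply: csimS => //; apply: (c2b cond).
Qed.

Lemma csimeq_refl G S o : Ct G S o -> simeq (G, S, o) (G, S, o).
Proof.
move=> h; split=> //; last exact: (c3b cond).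
exact/csim_refl/(c1_3 cond h).
Qed.

Lemma csimeq_sym J J' : simeq J J' -> simeq J' J.
Proof.
case: J J' => [[G S] o] [[G' S'] o'] [/= h h' hs he]; split=> //=.
  exact: csim_sym.
case/csim_snoc_inv: hs => hs he'.
by apply: (Cteq_transport0 hs); apply: (c4c cond he'); apply: (c3c cond).
Qed.

Lemma csimeq_trans J J' J'' : simeq J J' -> simeq J' J'' -> simeq J J''.
Proof.
case: J J' J'' => [[G S] o] [[G' S'] o'] [[G'' S''] o''].
move=> [/= h _ hs he] [/= _ h'' hs' he']; split=> //=; first exact: csim_trans hs'.
case/csim_snoc_inv: hs => hs hS; apply: (c3d cond he).
by apply: (c4c cond (c2c cond hS)); apply: (Cteq_transport0 (csim_sym hs)).
Qed.

Lemma csimeq_lift J F : inCt Ct J -> sim (bd J) F ->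
  exists J', [/\ inCt Ct J', bd J' = F & simeq J J'].
Proof.
case: J => [[G S] o] h /csim_snoc_invl [G' [S' [-> _ hs he]]].
have he' : Cteq G' S' o o.
  by apply: (Cteq_transport0 hs); apply: (c4c cond he); apply: (c3b cond).
have h' := c3a cond he'; exists (G', S', o); split=> //.
split=> //=; last exact: (c3b cond).
by apply: csimS; [exact: (c1_3 cond h) | exact: (c1_3 cond h') | |].
Qed.

Lemma csim_weaken G T G' T' : sim (G ++ [:: T]) (G' ++ [:: T']) ->
  forall D D', sim (G ++ D) (G' ++ D') ->
  sim (G ++ T :: map (tL (size G)) D) (G' ++ T' :: map (tL (size G')) D').
Proof.
move=> hs; have hsz := csim_snoc_size hs; have [hC hC'] := csim_C hs.
elim/last_ind=> [|D X IH] D' hsD.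
  by have /esym/size0nil -> := csim_cat_size hsz hsD.
case/lastP: D' hsD => [|D' X'] hsD.
  by have := csim_cat_size hsz hsD; rewrite size_rcons.
rewrite -!cats1 !catA in hsD; have [_ hCX'] := csim_C hsD.
case/csim_snoc_inv: hsD => hsD he.
have he1 := c5a cond hC he.
have he2 := c5a cond hC' (c2b cond hCX').
rewrite !map_rcons !cat_cons_rcons.
by apply: csimS; [exact: (c2a cond he1) | exact: (c2a cond he2) | exact: IH | rewrite -hsz].
Qed.

Lemma csim_subst G S s G' S' s' : simeq (G, S, s) (G', S', s') ->
  forall D D', sim (G ++ S :: D) (G' ++ S' :: D') ->
  sim (G ++ map (sL s) D) (G' ++ map (sL s') D').
Proof.
move=> [hCt hCt' hs hse]; rewrite /inCt /bd /= in hCt hCt' hs hse.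
have [hs0 _] := csim_snoc_inv hs.
have hsz := csim_size hs0.
elim/last_ind=> [|D X IH] D' hsD.
  case: D' hsD => [|Y D'] hsD; first by rewrite !cats0.
  by have := csim_size hsD; rewrite !size_cat /= hsz; lia.
case/lastP: D' hsD => [|D' X'] hsD.
  by have := csim_size hsD; rewrite !size_cat /= size_rcons hsz; lia.
rewrite !cat_cons_rcons in hsD; have [_ hCX'] := csim_C hsD.
case/csim_snoc_inv: hsD => hsD he.
have hCX : C (G ++ S :: D ++ [:: X']).
  by rewrite cats1 cat_cons_rcons; apply: (c2a cond (c2c cond he)).
have he1 := c6a cond he hCt.
have he2 := c7a cond hCX hse.
have he3 := c6a cond (c2b cond hCX') hCt'.
rewrite !map_rcons -!cats1 !catA.
by apply: csimS; [exact: (c2a cond he1) | exact: (c2a cond he3) | exact: IH |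
  exact: (c2d cond he1 he2)].
Qed.

Lemma csimeq_weaken G T D Q r G' T' D' Q' r' :
  sim (G ++ [:: T]) (G' ++ [:: T']) -> simeq (G ++ D, Q, r) (G' ++ D', Q', r') ->
  simeq (G ++ T :: map (tL (size G)) D, tL (size G) Q, tR (size G) r)
        (G' ++ T' :: map (tL (size G')) D', tL (size G') Q', tR (size G') r').
Proof.
move=> hs [hCt hCt' hsb he]; rewrite /inCt /bd /= in hCt hCt' hsb he.
have [hC hC'] := csim_C hs.
split; rewrite /inCt /bd /=.
- exact: (c1_4 cond hC hCt).
- exact: (c1_4 cond hC' hCt').
- have := csim_weaken hs (D := D ++ [:: Q]) (D' := D' ++ [:: Q']).
  by rewrite !map_cat -!catA; apply; rewrite !catA.
- by rewrite -(csim_snoc_size hs); apply: (c5b cond hC he).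
Qed.

Lemma csimeq_subst G S s D Q r G' S' s' D' Q' r' :
  simeq (G, S, s) (G', S', s') -> simeq (G ++ S :: D, Q, r) (G' ++ S' :: D', Q', r') ->
  simeq (G ++ map (sL s) D, sL s Q, sR s r) (G' ++ map (sL s') D', sL s' Q', sR s' r').
Proof.
move=> hss; have [hCt hCt' _ hse] := hss; rewrite /inCt /= in hCt hCt' hse.
move=> [k k' ksb ke]; rewrite /inCt /bd /= in k k' ksb ke.
split; rewrite /inCt /bd /=.
- exact: (c1_5 cond hCt k).
- exact: (c1_5 cond hCt' k').
- have := csim_subst hss (D := D ++ [:: Q]) (D' := D' ++ [:: Q']).
  by rewrite !map_cat -!catA; apply; rewrite -!catA in ksb.
- exact: (c3d cond (c6b cond ke hCt) (c7b cond (c3a cond (c3c cond ke)) hse)).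
Qed.

Lemma csimeq_var G T G' T' : sim (G ++ [:: T]) (G' ++ [:: T']) ->
  simeq (G ++ [:: T], tL (size G) T, var R (size G))
        (G' ++ [:: T'], tL (size G') T', var R (size G')).
Proof.
move=> hs; have [hC hC'] := csim_C hs; have hsz := csim_snoc_size hs.
have [_ he] := csim_snoc_inv hs.
have hv := c1_6 cond hC; have hv' := c1_6 cond hC'.
split; rewrite /inCt /bd /= //.
- apply: csimS => //; [exact: (c1_3 cond hv) | exact: (c1_3 cond hv') |].
  by have := c5a cond (G2 := [::]) hC; rewrite !cats0 /= -hsz; apply.
- by rewrite -hsz; apply: (c3b cond).
Qed.

End RegularCongruence.

Theorem proposition6p2 (R : monad) (LM : lmodule R)
    (C : seq (dL LM) -> Prop) (Ct : seq (dL LM) -> dL LM -> dR R -> Prop)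
    (Ceq : seq (dL LM) -> dL LM -> dL LM -> Prop)
    (Cteq : seq (dL LM) -> dL LM -> dR R -> dR R -> Prop) :
  conditions C Ct Ceq Cteq ->
  regular_congruence C Ct (csim C Ceq) (csimeq C Ct Ceq Cteq).
Proof.
move=> cond; split.
- exact: csim_C.
- exact: csim_refl cond.
- exact: csim_sym cond.
- exact: csim_trans cond.
- by move=> J J' [].
- by case=> [[G S] o] /(csimeq_refl cond).
- exact: csimeq_sym cond.
- exact: csimeq_trans cond.
- by move=> G G' hs; split; [exact: csim_size hs | exact: csim_ft].
- by move=> J J' [].
- move=> G T G' hC _ hs; exact: (csim_extend cond hC hs).
- move=> J F hJ _ hs; exact: (csimeq_lift cond hJ hs).
- move=> G T D G' T' D' _ _ _ _ hs hsD; exact: (csim_weaken cond hs hsD).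
- move=> G T D Q r G' T' D' Q' r' _ _ _ _ hs hsD; exact: (csimeq_weaken cond hs hsD).
- move=> G S s D G' S' s' D' _ _ _ _ hs hsD; exact: (csim_subst cond hs hsD).
- move=> G S s D Q r G' S' s' D' Q' r' _ _ _ _ hs hsD; exact: (csimeq_subst cond hs hsD).
- move=> G T G' T' _ _ hs; exact: (csimeq_var cond hs).
Qed.
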